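(* Let $\Lambda\subset\mathbb{R}^d$ be a full-rank lattice and $P=\Lambda\cap[0,1)^d$, and assume $|P|\ge 2$. Then $q(P)\ge q(\Lambda)$ and \[ h(P)\le \begin{cases} 2\sqrt{d}\, h(\Lambda) & \text{if } h(\Lambda)\ge 1/2,\\ (1+\sqrt{d})\,h(\Lambda) & \text{otherwise.}\end{cases} \] Consequently, \[ \rho(P)\le \begin{cases} 2\sqrt{d}\, \rho(\Lambda) & \text{if } h(\Lambda)\ge 1/2,\\ (1+\sqrt{d})\,\rho(\Lambda) & \text{otherwise.}\end{cases} \]
   Context: For a finite point set $P\subset[0,1]^d$ with at least two points: covering radius $h(P)=\sup_{x\in[0,1]^d}\min_{y\in P}\|x-y\|_2$, separation radius $q(P)=\frac12\min_{x,y\in P,\,x\ne y}\|x-y\|_2$, mesh ratio $\rho(P)=h(P)/q(P)$. For a full-rank lattice $\Lambda\subset\mathbb{R}^d$: $h(\Lambda)=\sup_{x\in\mathbb{R}^d}\min_{y\in\Lambda}\|x-y\|_2$, $q(\Lambda)=\frac12\min_{x\in\Lambda\setminus\{0\}}\|x\|_2$, $\rho(\Lambda)=h(\Lambda)/q(\Lambda)$. *)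

From HB Require Import structures.
From mathcomp Require Import all_boot all_order all_algebra.
From mathcomp Require Import all_classical all_reals.
Set Implicit Arguments. Unset Strict Implicit. Unset Printing Implicit Defensive.
Import Order.TTheory GRing.Theory Num.Theory.
Local Open Scope ring_scope.
Local Open Scope classical_set_scope.

Section Defs.
Variables (R : realType) (d : nat).
Notation V := 'rV[R]_d.

Definition enorm (x : V) : R := Num.sqrt (\sum_(i < d) x ord0 i ^+ 2).

Definition lattice (B : 'M[R]_d) : set V :=
  [set x | exists z : 'rV[int]_d, x = map_mx (fun k : int => k%:~R) z *m B].

Definition full_rank (B : 'M[R]_d) : Prop := B \in unitmx.

Definition cube_co : set V := [set x | forall i, 0 <= x ord0 i /\ x ord0 i < 1].
Definition cube_cc : set V := [set x | forall i, 0 <= x ord0 i /\ x ord0 i <= 1].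

Definition dist_to (S : set V) (x : V) : R := inf [set enorm (x - y) | y in S].

Definition cov_radius (Om S : set V) : R := sup [set dist_to S x | x in Om].

Definition hP (P : set V) : R := cov_radius cube_cc P.
Definition qP (P : set V) : R :=
  inf [set r | exists x y, P x /\ P y /\ x != y /\ r = enorm (x - y)] / 2.
Definition rhoP (P : set V) : R := hP P / qP P.

Definition hL (B : 'M[R]_d) : R := cov_radius setT (lattice B).
Definition qL (B : 'M[R]_d) : R :=
  inf [set enorm x | x in lattice B `&` [set x | x != 0]] / 2.
Definition rhoL (B : 'M[R]_d) : R := hL B / qL B.

End Defs.
Arguments cube_co {R d}.
Arguments cube_cc {R d}.

From HB Require Import structures.
From mathcomp Require Import all_boot all_order all_algebra.
From mathcomp Require Import all_classical all_reals.
From mathcomp Require Import ring lra.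
Set Implicit Arguments. Unset Strict Implicit. Unset Printing Implicit Defensive.
Import Order.TTheory GRing.Theory Num.Theory.
Local Open Scope ring_scope.
Local Open Scope classical_set_scope.

(* Differences of distinct points of P are nonzero lattice vectors, whence
   q(P) >= q(L).  If h(L) >= 1/2, any point of P is within sqrt d <= 2 sqrt d h(L)
   of every point of the cube.  Otherwise take h(L) < l <= 1/2 and move x into
   the inner cube [l, 1 - l]^d, which costs at most sqrt d l; the moved point has
   a lattice point within distance l, and that point lies in [0,1)^d, so
   dist(x, P) <= (1 + sqrt d) l.  Since h, q and rho are defined through sup and
   inf, one also needs h(L) finite (round coordinates in the basis B) and
   q(L) > 0 (coordinates of a lattice vector, computed with B^-1, are integers). *)

Section EuclideanNorm.
Variables (R : realType) (d : nat).
Implicit Types (f g : 'I_d -> R) (u v : 'rV[R]_d).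

Lemma sum_sqr_ge0 f : 0 <= \sum_i f i ^+ 2.
Proof. by apply: sumr_ge0 => i _; exact: sqr_ge0. Qed.

Lemma sum_mul_sqr_le f g :
  (\sum_i f i * g i) ^+ 2 <= (\sum_i f i ^+ 2) * (\sum_i g i ^+ 2).
Proof.
set A := \sum_i f i ^+ 2; set C := \sum_i f i * g i; set D := \sum_i g i ^+ 2.
have quad_ge0 t : 0 <= t ^+ 2 * A + 2 * t * C + D.
  have -> : t ^+ 2 * A + 2 * t * C + D = \sum_i (t * f i + g i) ^+ 2.
    rewrite /A /C /D !mulr_sumr -!big_split /=.
    by apply: eq_bigr => i _; ring.
  exact: sum_sqr_ge0.
have [A0|A_neq0] := eqVneq A 0.
  have f0 i : f i = 0.
    move/eqP: A0; rewrite psumr_eq0; last by move=> j _; exact: sqr_ge0.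
    by move/allP/(_ i (mem_index_enum i)) => /=; rewrite sqrf_eq0 => /eqP.
  have -> : C = 0 by rewrite /C big1 // => i _; rewrite f0 mul0r.
  by rewrite expr2 mul0r A0 mul0r.
have A_gt0 : 0 < A by rewrite lt_def A_neq0 sum_sqr_ge0.
(* the discriminant argument: evaluate the quadratic at its minimiser *)
have := quad_ge0 (- C / A).
have -> : (- C / A) ^+ 2 * A + 2 * (- C / A) * C + D = D - C ^+ 2 / A by field.
by rewrite subr_ge0 ler_pdivrMr // mulrC.
Qed.

Lemma enorm_ge0 u : 0 <= enorm u.
Proof. exact: sqrtr_ge0. Qed.

Lemma enormD u v : enorm (u + v) <= enorm u + enorm v.
Proof.
rewrite /enorm.
set A := \sum_i u ord0 i ^+ 2; set D := \sum_i v ord0 i ^+ 2.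
set C := \sum_i u ord0 i * v ord0 i.
have A0 : 0 <= A := sum_sqr_ge0 _.
have D0 : 0 <= D := sum_sqr_ge0 _.
have C_le : C <= Num.sqrt A * Num.sqrt D.
  rewrite -sqrtrM //; apply: le_trans (ler_norm C) _.
  by rewrite -sqrtr_sqr ler_sqrt ?mulr_ge0 //; exact: sum_mul_sqr_le.
have -> : \sum_i (u + v) ord0 i ^+ 2 = A + 2 * C + D.
  rewrite /A /C /D mulr_sumr -!big_split /=.
  by apply: eq_bigr => i _; rewrite mxE; ring.
have S0 : 0 <= Num.sqrt A + Num.sqrt D by rewrite addr_ge0 // sqrtr_ge0.
rewrite -(ger0_norm S0) -sqrtr_sqr ler_sqrt ?sqr_ge0 // sqrrD !sqr_sqrtr //.
lra.
Qed.

Lemma norm_coord_le_enorm u i : `|u ord0 i| <= enorm u.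
Proof.
rewrite /enorm -sqrtr_sqr ler_sqrt; last exact: sum_sqr_ge0.
by rewrite (bigD1 i) //= lerDl; apply: sumr_ge0 => j _; exact: sqr_ge0.
Qed.

Lemma enorm_le_sqrt_dim u k : 0 <= k -> (forall i, `|u ord0 i| <= k) ->
  enorm u <= Num.sqrt d%:R * k.
Proof.
move=> k0 u_le; rewrite /enorm -(ger0_norm k0) -sqrtr_sqr -sqrtrM ?ler0n //.
rewrite ler_sqrt; last by rewrite mulr_ge0 ?ler0n ?sqr_ge0.
have -> : d%:R * k ^+ 2 = \sum_(i < d) k ^+ 2 :> R.
  by rewrite sumr_const card_ord mulr_natl.
apply: ler_sum => i _.
by rewrite -real_normK ?num_real // lerXn2r ?nnegrE ?normr_ge0.
Qed.

Lemma enorm_le_sum_norm u : enorm u <= \sum_i `|u ord0 i|.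
Proof.
have S0 : 0 <= \sum_i `|u ord0 i| by apply: sumr_ge0.
rewrite /enorm -(ger0_norm S0) -sqrtr_sqr ler_sqrt ?sqr_ge0 //.
suff [] : \sum_i u ord0 i ^+ 2 <= (\sum_i `|u ord0 i|) ^+ 2 /\
          0 <= \sum_i `|u ord0 i| by [].
elim/big_rec2: _ => [|i a b _ [le_ab b0]]; first by rewrite expr0n lexx.
split; last by rewrite addr_ge0.
rewrite sqrrD -real_normK ?num_real //.
have : 0 <= `|u ord0 i| * a by rewrite mulr_ge0 ?normr_ge0.
lra.
Qed.

End EuclideanNorm.

Section Distance.
Variables (R : realType) (d : nat).
Implicit Types (S : set 'rV[R]_d) (x y : 'rV[R]_d).

Lemma inf_ge0 (E : set R) : (forall r, E r -> 0 <= r) -> 0 <= inf E.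
Proof.
move=> E_ge0; have [[r Er]|E0] := pselect (E !=set0).
  by apply: lb_le_inf; [exists r | move=> s /E_ge0].
by rewrite (_ : E = set0) ?inf0 // -subset0 => r Er; apply: E0; exists r.
Qed.

Lemma dist_to_ge0 S x : 0 <= dist_to S x.
Proof. by apply: inf_ge0 => _ [y _ <-]; exact: enorm_ge0. Qed.

Lemma dist_to_le S x y : S y -> dist_to S x <= enorm (x - y).
Proof.
move=> Sy; apply: ge_inf; last by exists y.
by exists 0 => _ [z _ <-]; exact: enorm_ge0.
Qed.

Lemma dist_to_approx S x e : S !=set0 -> 0 < e ->
  exists2 y, S y & enorm (x - y) < dist_to S x + e.
Proof.
move=> [y0 Sy0] e_gt0.
have inf_dist : has_inf [set enorm (x - y) | y in S].
  split; first by exists (enorm (x - y0)), y0.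
  by exists 0 => _ [z _ <-]; exact: enorm_ge0.
by have [_ [y Sy <-]] := inf_adherent e_gt0 inf_dist; exists y.
Qed.

End Distance.

Section Lattice.
Variables (R : realType) (d : nat) (B : 'M[R]_d).
Hypothesis B_unit : B \in unitmx.

Local Notation intr_row z := (map_mx (fun k : int => (k%:~R : R)) (z : 'rV[int]_d)).

Lemma lattice0 : lattice B 0.
Proof. by exists 0; rewrite map_mx0 mul0mx. Qed.

Lemma latticeB x y : lattice B x -> lattice B y -> lattice B (x - y).
Proof.
move=> [z1 ->] [z2 ->]; exists (z1 - z2); rewrite -mulmxBl; congr (_ *m _).
by apply/matrixP => i j; rewrite !mxE intrB.
Qed.

(* Rounding down the coordinates of y in the basis B gives a lattice point
   whose difference with y has coordinates in [0, 1). *)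
Lemma dist_to_lattice_bounded y :
  dist_to (lattice B) y <= \sum_j \sum_i `|B i j|.
Proof.
set w := y *m invmx B; set z : 'rV[int]_d := \row_i Num.floor (w ord0 i).
have Lz : lattice B (intr_row z *m B) by exists z.
apply: le_trans (dist_to_le y Lz) _.
have -> : y - intr_row z *m B = (w - intr_row z) *m B by rewrite mulmxBl mulmxKV.
apply: le_trans (enorm_le_sum_norm _) _; apply: ler_sum => j _.
rewrite mxE; apply: le_trans (ler_norm_sum _ _ _) _; apply: ler_sum => i _.
rewrite normrM ler_piMl ?normr_ge0 //.
have -> : (w - intr_row z) ord0 i = w ord0 i - (Num.floor (w ord0 i))%:~R.
  by rewrite !mxE.
have := floor_le (w ord0 i); have := floorD1_gt (w ord0 i).
by rewrite intrD => ? ?; rewrite ger0_norm; lra.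
Qed.

(* A nonzero lattice vector has a nonzero, hence >= 1 in absolute value,
   integer coordinate, and that coordinate is a linear form of v via B^-1. *)
Lemma lattice_enorm_lower_bound v : lattice B v -> v != 0 ->
  1 <= enorm v * (\sum_i \sum_j `|invmx B j i| + 1).
Proof.
move=> [z vE] v_neq0.
have zE : intr_row z = v *m invmx B by rewrite vE mulmxK.
have [i zi_neq0] : exists i, z ord0 i != 0.
  apply/existsP; apply: contraR v_neq0; rewrite negb_exists => /forallP z0.
  rewrite vE (_ : z = 0) ?map_mx0 ?mul0mx //.
  by apply/matrixP => a b; rewrite (ord1 a) mxE; apply/eqP/negPn/z0.
have one_le : 1 <= `|(z ord0 i)%:~R : R|.
  by rewrite -intr_norm (ler_int _ 1) -gtz0_ge1 normr_gt0.
have zi : (z ord0 i)%:~R = (v *m invmx B) ord0 i by rewrite -zE mxE.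
rewrite zi mxE in one_le.
apply: le_trans one_le _; apply: le_trans (ler_norm_sum _ _ _) _.
apply: (@le_trans _ _ (enorm v * \sum_j `|invmx B j i|)).
  rewrite mulr_sumr; apply: ler_sum => j _; rewrite normrM.
  by apply: ler_wpM2r; [exact: normr_ge0 | exact: norm_coord_le_enorm].
apply: ler_wpM2l; first exact: enorm_ge0.
rewrite [X in _ <= X + 1](bigD1 i) //= -addrA lerDl addr_ge0 //.
by apply: sumr_ge0 => k _; apply: sumr_ge0.
Qed.

End Lattice.

Section Radii.
Variables (R : realType) (d : nat) (B : 'M[R]_d).

Lemma qL_le_qP (S : set 'rV[R]_d) : S `<=` lattice B ->
  (exists x y, S x /\ S y /\ x != y) -> qL B <= qP S.
Proof.
move=> S_sub [x [y [Sx [Sy xy]]]]; rewrite /qL /qP ler_pM2r ?invr_gt0 ?ltr0n //.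
apply: lb_le_inf; first by exists (enorm (x - y)), x, y.
move=> _ [a [b [Sa [Sb [ab ->]]]]]; apply: ge_inf.
  by exists 0 => _ [u _ <-]; exact: enorm_ge0.
by exists (a - b) => //; split; [apply: latticeB; apply: S_sub | rewrite /= subr_eq0].
Qed.

Hypothesis B_unit : full_rank B.

Lemma dist_to_lattice_le_hL y : dist_to (lattice B) y <= hL B.
Proof.
apply: sup_upper_bound; last by exists y.
split; first by exists (dist_to (lattice B) 0), 0.
by exists (\sum_j \sum_i `|B i j|) => _ [x _ <-]; exact: dist_to_lattice_bounded.
Qed.

Lemma hL_ge0 : 0 <= hL B.
Proof. exact: le_trans (dist_to_ge0 _ 0) (dist_to_lattice_le_hL 0). Qed.

Lemma qL_gt0 v : lattice B v -> v != 0 -> 0 < qL B.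
Proof.
move=> Lv v_neq0; rewrite /qL divr_gt0 //.
set K := \sum_i \sum_j `|invmx B j i| + 1.
have K_gt0 : 0 < K by rewrite ltr_pwDr // sumr_ge0 // => i _; apply: sumr_ge0.
apply: lt_le_trans (_ : 0 < 1 / K) _; first by rewrite divr_gt0.
apply: lb_le_inf; first by exists (enorm v), v.
move=> _ [u [Lu u_neq0] <-]; rewrite ler_pdivrMr //.
exact: lattice_enorm_lower_bound.
Qed.

End Radii.

Section CubeCovering.
Variables (R : realType) (d : nat).
Implicit Types (P : set 'rV[R]_d) (x y p : 'rV[R]_d) (B : 'M[R]_d).

Lemma hP_le P c : (forall x, cube_cc x -> dist_to P x <= c) -> hP P <= c.
Proof.
move=> dist_le; apply: ge_sup; last by move=> _ [x Cx <-]; exact: dist_le.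
by exists (dist_to P 0), 0 => // i; rewrite mxE; lra.
Qed.

Lemma hP_le_sqrt_dim P p : P p -> cube_cc p -> hP P <= Num.sqrt d%:R.
Proof.
move=> Pp Cp; apply: hP_le => x Cx; apply: le_trans (dist_to_le x Pp) _.
rewrite -[X in _ <= X]mulr1; apply: enorm_le_sqrt_dim => // i.
rewrite !mxE; have [? ?] := Cx i; have [? ?] := Cp i.
by rewrite ler_norml; apply/andP; split; lra.
Qed.

Lemma cube_clip x l : cube_cc x -> 0 <= l -> 2 * l <= 1 -> exists y,
  (forall i, l <= y ord0 i <= 1 - l) /\ (forall i, `|(x - y) ord0 i| <= l).
Proof.
move=> Cx l_ge0 l_le.
exists (\row_i (if x ord0 i < l then l
                else if 1 - l < x ord0 i then 1 - l else x ord0 i)).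
split=> i; rewrite !mxE; have [? ?] := Cx i;
  case: (ltP (x ord0 i) l) => ?; case: (ltP (1 - l) (x ord0 i)) => ?;
  rewrite ?ler_norml; apply/andP; split; lra.
Qed.

Lemma inner_cube_ball_sub_cube_co y p l :
  (forall i, l <= y ord0 i <= 1 - l) -> enorm (y - p) < l -> cube_co p.
Proof.
move=> Cy yp i; have := le_lt_trans (norm_coord_le_enorm (y - p) i) yp.
by rewrite !mxE ltr_norml => /andP [? ?]; have /andP [? ?] := Cy i; split; lra.
Qed.

Lemma dist_to_lattice_cube_le B x l : full_rank B -> hL B < l -> 2 * l <= 1 ->
  cube_cc x -> dist_to (lattice B `&` cube_co) x <= (1 + Num.sqrt d%:R) * l.
Proof.
move=> B_unit hL_lt l_le Cx.
have l_ge0 : 0 <= l := le_trans (hL_ge0 B_unit) (ltW hL_lt).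
have [y [Cy xy]] := cube_clip Cx l_ge0 l_le.
have dist_lt : dist_to (lattice B) y < l.
  exact: le_lt_trans (dist_to_lattice_le_hL B_unit y) hL_lt.
have gap_gt0 : 0 < l - dist_to (lattice B) y by rewrite subr_gt0.
have [p Lp] := dist_to_approx y (ex_intro _ 0 (lattice0 B)) gap_gt0.
rewrite subrKC => yp.
have Pp : (lattice B `&` cube_co) p.
  by split=> //; exact: inner_cube_ball_sub_cube_co Cy yp.
apply: le_trans (dist_to_le x Pp) _.
have -> : x - p = (x - y) + (y - p) by rewrite addrA subrK.
apply: le_trans (enormD _ _) _.
have := enorm_le_sqrt_dim l_ge0 xy; rewrite mulrDl mul1r; lra.
Qed.

Lemma hP_lattice_cube_le B : full_rank B -> hL B < 1 / 2 ->
  hP (lattice B `&` cube_co) <= (1 + Num.sqrt d%:R) * hL B.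
Proof.
move=> B_unit hL_lt; apply: hP_le => x Cx.
have s_gt0 : 0 < 1 + Num.sqrt (d%:R : R) by rewrite ltr_pwDl ?sqrtr_ge0.
rewrite -ler_pdivrMl //; apply/ler_addgt0Pr => e e_gt0.
have [le_half|lt_half] := lerP (hL B + e) (1 / 2).
  by rewrite ler_pdivrMl //; apply: dist_to_lattice_cube_le => //; lra.
apply: le_trans (ltW lt_half); rewrite ler_pdivrMl //.
by apply: dist_to_lattice_cube_le => //; lra.
Qed.

End CubeCovering.

Theorem mainTheorem3 (R : realType) (d : nat) (B : 'M[R]_d) :
  full_rank B ->
  (exists x y : 'rV[R]_d,
      (lattice B `&` cube_co) x /\ (lattice B `&` cube_co) y /\ x != y) ->
  let P := lattice B `&` cube_co in
  let c := if 1 / 2 <= hL B then 2 * Num.sqrt (d%:R) else 1 + Num.sqrt (d%:R) in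
  qL B <= qP P /\ hP P <= c * hL B /\ rhoP P <= c * rhoL B.
Proof.
move=> B_unit two_points P c; have [x [y [Px [Py x_neq_y]]]] := two_points.
have qL_le : qL B <= qP P by apply: qL_le_qP => // u [].
have qL_pos : 0 < qL B.
  apply: (@qL_gt0 _ _ _ B_unit (x - y)); last by rewrite subr_eq0.
  by apply: latticeB; [case: Px | case: Py].
have sqrt_ge0 : 0 <= Num.sqrt (d%:R : R) := sqrtr_ge0 _.
have hP_le_c : hP P <= c * hL B.
  rewrite /c; case: ifP => [half_le|/negbT]; last first.
    by rewrite -ltNge; exact: hP_lattice_cube_le.
  apply: le_trans (@hP_le_sqrt_dim _ _ _ x Px _) _.
    by move=> i; have [? ?] := Px.2 i; split; lra.
  nra.
have c_ge0 : 0 <= c by rewrite /c; case: ifP => _; [rewrite mulr_ge0 | rewrite addr_ge0].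
split=> //; split=> //; rewrite /rhoP /rhoL mulrA.
apply: (@le_trans _ _ (c * hL B / qP P)).
  by rewrite ler_pM2r // invr_gt0 (lt_le_trans qL_pos).
by rewrite ler_wpM2l ?mulr_ge0 ?hL_ge0 // lef_pV2 ?posrE // (lt_le_trans qL_pos).
Qed.
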